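(* Let $H$ be a finite index subgroup of $F_2$ which contains an element of odd length, and let $y\in F_2$. Then there is an $N\in\mathbb{N}$ such that the constants $a_{i,xH}$ satisfy $a_{i,xH}=0$ for every $xH\in F_2/H$ and every $i\geq N$.
   Context: $F_2$ is the free group on $a,b$, $\Xi=\{a,b,a^{-1},b^{-1}\}$, and the length of an element is the length of its reduced word in $\Xi$. Sets $\Omega_{k,xH}\subseteq\Xi$ for $k\geq -1$, $xH\in F_2/H$ are defined recursively: $\Omega_{-1,xH}=\varnothing$ for all $xH$; $\Omega_{0,yH}=\Xi$ and $\Omega_{0,xH}=\varnothing$ for $xH\neq yH$; and for $k\geq 0$, $\Omega_{k+1,zH}=\{h\in\Xi:\Omega_{k-1,zH}=\varnothing\text{ and }\Omega_{k,h^{-1}zH}\neq\varnothing\}$. For $i\geq 1$, $a_{i,xH}=|\Omega_{i,xH}|-1$ if $\Omega_{i,xH}\neq\varnothing$ and $a_{i,xH}=0$ otherwise. (These are the constants for which $|yH\cap S_n|=\sum_{i=1}^{n-1}\sum_{xH}a_{i,xH}|xH\cap S_{n-i}|$ for $n\geq2$, where $S_n$ is the set of elements of length $n$.) *)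

(* The free group F_2 on a,b as reduced words over
   Xi = {a,b,a^-1,b^-1}. *)
From mathcomp Require Import all_boot.
Set Implicit Arguments. Unset Strict Implicit. Unset Printing Implicit Defensive.

(* A letter is (g, s): g = false for a, true for b; s = true means inverse. *)
Definition Xi : finType := (bool * bool)%type.
Definition letter_a : Xi := (false, false).
Definition letter_b : Xi := (true, false).
Definition linv (x : Xi) : Xi := (x.1, ~~ x.2).

Lemma linvK : involutive linv. Proof. by case=> g s; rewrite /linv /= negbK. Qed.

Definition reduced (w : seq Xi) : bool :=
  if w is x :: t then path (fun u v => v != linv u) x t else true.

Definition rstep (x : Xi) (acc : seq Xi) : seq Xi :=
  if acc is y :: t then (if y == linv x then t else x :: acc) else [:: x].
Definition reduce (w : seq Xi) : seq Xi := foldr rstep [::] w.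

Lemma reduce_reduced w : reduced (reduce w).
Proof.
elim: w => [|x w] //=.
move: (reduce w) => [|y t] //= Hp.
case: eqP => [_|/eqP ne]; last by rewrite /= Hp andbT.
by case: t Hp => //= z t /andP[].
Qed.

Definition F2 := {w : seq Xi | reduced w}.
Definition F2one : F2 := exist _ [::] is_true_true.
Definition F2mul (u v : F2) : F2 :=
  exist _ (reduce (val u ++ val v)) (reduce_reduced _).
Definition F2inv (u : F2) : F2 :=
  exist _ (reduce (rev (map linv (val u)))) (reduce_reduced _).
Definition F2let (h : Xi) : F2 := exist _ [:: h] is_true_true.
Definition F2len (u : F2) : nat := size (val u).

Definition is_subgroup (H : pred F2) : Prop :=
  H F2one /\ (forall u v, H u -> H v -> H (F2mul u (F2inv v))).

Definition finite_index (H : pred F2) : Prop :=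
  exists reps : seq F2, forall x : F2, exists2 r, r \in reps & H (F2mul (F2inv r) x).

(* Coset equality: xH = zH  iff  x^-1 z \in H. The sets Omega_{k,zH} are
   defined on representatives z; OmegaPair H y k z = (Omega_{k-1,zH}, Omega_{k,zH}). *)
Fixpoint OmegaPair (H : pred F2) (y : F2) (k : nat) (z : F2) : {set Xi} * {set Xi} :=
  match k with
  | 0 => (set0, if H (F2mul (F2inv y) z) then setT else set0)
  | k'.+1 =>
      ((OmegaPair H y k' z).2,
       [set h : Xi | ((OmegaPair H y k' z).1 == set0)
                     && ((OmegaPair H y k' (F2mul (F2inv (F2let h)) z)).2 != set0)])
  end.

Definition Omega (H : pred F2) (y : F2) (k : nat) (z : F2) : {set Xi} :=
  (OmegaPair H y k z).2.

(* a_{i,xH} (meaningful for i >= 1) *)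
Definition a_const (H : pred F2) (y : F2) (i : nat) (x : F2) : nat :=
  if Omega H y i x == set0 then 0 else #|Omega H y i x| - 1.

(* Say that zH is reached at time k if it is the end of a walk of length k
   from yH in the Schreier graph of H, a step going from zH to h^-1 zH.
   By induction on k, Omega_{k,zH} is nonempty exactly when zH is reached at
   time k but not at time k - 2, and backtracking along an edge shows that a
   coset reached at time k is reached at time k + 2.  If r^-1 x lies in H and
   w in H has odd length, the words y r^-1 and y w r^-1 give walks from yH to
   xH of both parities, of length bounded independently of x since H has
   finitely many cosets.  So every coset is reached at all large times, and
   Omega_{k,xH} is empty from then on. *)

From HB Require Import structures.
From mathcomp Require Import all_boot.
Set Implicit Arguments. Unset Strict Implicit. Unset Printing Implicit Defensive.

Lemma rstep_reduced x w : reduced w -> reduced (rstep x w).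
Proof.
case: w => [|y t] //= Hp.
case: eqP => [_|/eqP ne]; last by rewrite /= Hp andbT.
by case: t Hp => //= z t /andP[].
Qed.

Lemma foldr_rstep_reduced t s : reduced t -> reduced (foldr rstep t s).
Proof. by move=> Ht; elim: s => //= x s IH; apply: rstep_reduced. Qed.

Lemma reduce_id w : reduced w -> reduce w = w.
Proof.
elim: w => // x w IH /= Hp; rewrite (IH (path_sorted Hp)).
by case: w Hp {IH} => //= y t /andP[ne _]; rewrite (negbTE ne).
Qed.

Lemma rstepK x w : reduced w -> rstep x (rstep (linv x) w) = w.
Proof.
case: w => [|y t] /=; first by rewrite eqxx.
case: eqP => [->|/eqP ne] Hp; last by rewrite /= eqxx.
rewrite linvK in Hp *.
by case: t Hp => [|z t] //= /andP[nz _]; rewrite (negbTE nz).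
Qed.

Lemma foldr_rstep_comm t x s : reduced t ->
  foldr rstep t (rstep x s) = rstep x (foldr rstep t s).
Proof.
move=> Ht; case: s => [|y s] //=.
case: eqP => [->|_] //=.
by rewrite rstepK // foldr_rstep_reduced.
Qed.

Lemma foldr_rstep_reduce t u : reduced t -> foldr rstep t (reduce u) = foldr rstep t u.
Proof. by move=> Ht; elim: u => //= x u IH; rewrite foldr_rstep_comm // IH. Qed.

Lemma reduce_cat u v : reduce (u ++ v) = foldr rstep (reduce v) u.
Proof. by rewrite /reduce foldr_cat. Qed.

Lemma reduce_catl u v : reduce (reduce u ++ v) = reduce (u ++ v).
Proof. by rewrite !reduce_cat foldr_rstep_reduce // reduce_reduced. Qed.

Lemma reduce_catr u v : reduce (u ++ reduce v) = reduce (u ++ v).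
Proof. by rewrite !reduce_cat reduce_id // reduce_reduced. Qed.

Definition winv (w : seq Xi) : seq Xi := rev (map linv w).

Lemma winvK : involutive winv.
Proof. by move=> w; rewrite /winv map_rev revK (mapK linvK). Qed.

Lemma reduce_winvl u : reduce (winv u ++ u) = [::].
Proof.
elim: u => // x u IH.
rewrite /winv /= rev_cons -/(winv u) cat_rcons -reduce_catr /=.
by rewrite -{2}(linvK x) rstepK ?reduce_reduced // reduce_catr.
Qed.

Lemma reduce_winvr u : reduce (u ++ winv u) = [::].
Proof. by rewrite -{1}(winvK u) reduce_winvl. Qed.

Lemma F2mulA : associative F2mul.
Proof. by move=> u v w; apply: val_inj; rewrite /= reduce_catl reduce_catr catA. Qed.

Lemma F2mul1g : left_id F2one F2mul.
Proof. by move=> u; apply: val_inj; rewrite /= reduce_id //; apply: valP. Qed.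

Lemma F2mulg1 : right_id F2one F2mul.
Proof. by move=> u; apply: val_inj; rewrite /= cats0 reduce_id //; apply: valP. Qed.

Lemma F2mulVg : left_inverse F2one F2inv F2mul.
Proof. by move=> u; apply: val_inj; rewrite /= reduce_catl reduce_winvl. Qed.

Lemma F2mulgV : right_inverse F2one F2inv F2mul.
Proof. by move=> u; apply: val_inj; rewrite /= reduce_catr reduce_winvr. Qed.

HB.instance Definition _ := [Choice of F2 by <:].
HB.instance Definition _ := isGroup.Build F2 F2mulA F2mul1g F2mulg1 F2mulVg F2mulgV.

Section F2Group.
Local Open Scope group_scope.

Lemma F2let_linvV x : (F2let (linv x))^-1 = F2let x.
Proof. by apply: val_inj; rewrite /= linvK. Qed.

Lemma prod_letters (g : F2) : \prod_(x <- val g) F2let x = g.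
Proof.
case: g => w; elim: w => [|x w IH] Hw /=; first by rewrite big_nil; apply: val_inj.
by rewrite big_cons (IH (path_sorted Hw)); apply: val_inj; apply: reduce_id.
Qed.

Lemma is_subgroup_closed (H : pred F2) : is_subgroup H -> group_closed H.
Proof. by case=> H1 Hdiv; split=> // u v; apply: Hdiv. Qed.
End F2Group.

Lemma add2_closed_eventually (P : nat -> Prop) a b :
  (forall k, P k -> P k.+2) -> P a -> P b -> odd a != odd b ->
  forall j, maxn a b <= j -> P j.
Proof.
move=> P2 Pa Pb ab j; rewrite geq_max => /andP[aj bj].
have P_double c n : P c -> P (c + n.*2).
  by move=> Pc; elim: n => [|n IH]; rewrite ?addn0 // doubleS !addnS; apply: P2.
have P_same c : P c -> c <= j -> odd j = odd c -> P j.
  move=> Pc cj jc; rewrite -(subnKC cj) -[j - c]odd_double_half oddB // jc addbb.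
  exact: P_double.
have [ja|ja] := eqVneq (odd j) (odd a); first exact: P_same Pa aj ja.
by apply: P_same Pb bj _; move: ja ab; case: (odd j); case: (odd a); case: (odd b).
Qed.

Section Reach.
Variables (H : pred F2) (y : F2).
Local Open Scope group_scope.

Fixpoint reach k z : bool :=
  if k is k'.+1 then [exists h, reach k' ((F2let h)^-1 * z)] else H (y^-1 * z).

Definition reach_earlier k z : bool := if k is k'.+2 then reach k' z else false.

Lemma reach_step k h z : reach k z -> reach k.+1 ((F2let h)^-1 * z).
Proof. by move=> Hk; apply/existsP; exists (linv h); rewrite F2let_linvV mulVKg. Qed.

Lemma reach_add2 k z : reach k z -> reach k.+2 z.
Proof. by move=> Hk; apply/existsP; exists letter_a; apply: reach_step. Qed.

Lemma reach_earlier_step k h z :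
  reach_earlier k z -> reach_earlier k.+1 ((F2let h)^-1 * z).
Proof. by case: k => [|[|k]] //; apply: reach_step. Qed.

Lemma reach_word s z : H (y^-1 * \prod_(x <- s) F2let x * z) -> reach (size s) z.
Proof.
elim/last_ind: s z => [|s x IH] z; first by rewrite big_nil mulg1.
rewrite big_rcons size_rcons => Hz.
by rewrite -[z](mulKg (F2let x)); apply/reach_step/IH; rewrite !mulgA in Hz *.
Qed.

Lemma Omega_S k z : Omega H y k.+1 z =
  [set h | ((OmegaPair H y k z).1 == set0) && (Omega H y k ((F2let h)^-1 * z) != set0)].
Proof. by []. Qed.

Lemma OmegaPair_fst k z :
  (OmegaPair H y k z).1 = if k is k'.+1 then Omega H y k' z else set0.
Proof. by case: k. Qed.

Lemma Omega_neq0 k z : (Omega H y k z != set0) = reach k z && ~~ reach_earlier k z.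
Proof.
elim/ltn_ind: k z => -[|k] IH z.
  rewrite /Omega /= andbT; case: (H _); last by rewrite eqxx.
  by apply/set0Pn; exists letter_a; rewrite inE.
have prev_eq0 :
    ((OmegaPair H y k z).1 == set0) = reach_earlier k.+1 z ==> reach_earlier k.-1 z.
  case: k IH => [|k] IH /=; first exact: eqxx.
  by rewrite -[_ == set0]negbK -/(Omega H y k z) IH // negb_and negbK implybE.
have back h : reach_earlier k ((F2let h)^-1 * z) -> reach_earlier k.+1 z.
  by move/(reach_earlier_step (linv h)); rewrite F2let_linvV mulVKg.
have forth h : reach_earlier k.-1 z -> reach_earlier k ((F2let h)^-1 * z).
  by case: k {IH prev_eq0 back} => [|k] // /(reach_earlier_step h).
rewrite Omega_S prev_eq0.
apply/set0Pn/andP => [[h]|[/existsP[h Rh] NEz]].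
  rewrite inE IH // => /and3P[AB Rh NEh]; split; first by apply/existsP; exists h.
  by apply: contra NEh => /(implyP AB); apply: forth.
exists h; rewrite inE IH //; apply/and3P; split=> //; first by rewrite (negbTE NEz).
by apply: contra NEz; apply: back.
Qed.

Lemma Omega_eq0 k z : reach k z -> Omega H y k.+2 z = set0.
Proof. by move=> Rk; apply/eqP; rewrite -[_ == _]negbK Omega_neq0 /= Rk andbF. Qed.

Hypotheses (subH : is_subgroup H) (finH : finite_index H).

Lemma reach_eventually : (exists w : F2, H w && odd (F2len w)) ->
  exists M, forall j z, M <= j -> reach j z.
Proof.
move=> [w /andP[Hw odd_w]]; have [reps Hreps] := finH.
have mulH := group_closedM (is_subgroup_closed subH).
exists (F2len y + F2len w + \max_(r <- reps) F2len r^-1) => j z.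
have [r r_reps Hrz] : exists2 r : F2, r \in reps & H (r^-1 * z) := Hreps z.
set s0 := val y ++ val r^-1; set s1 := val y ++ val w ++ val r^-1.
have R0 : reach (size s0) z.
  by apply: reach_word; rewrite big_cat !prod_letters mulKg.
have R1 : reach (size s1) z.
  apply: reach_word; rewrite !big_cat !prod_letters mulKg -mulgA.
  exact: mulH Hw Hrz.
have odd_s01 : odd (size s0) != odd (size s1).
  rewrite !size_cat !oddD odd_w.
  by case: (odd (size (val y))); case: (odd (size (val r^-1))).
move=> le_Mj; apply: (add2_closed_eventually (@reach_add2^~ z) R0 R1 odd_s01).
have le_s1 : size s1 <= j.
  apply: leq_trans le_Mj; rewrite !size_cat addnA leq_add2l.
  exact: (@leq_bigmax_seq _ reps xpredT (fun r => F2len r^-1)).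
by rewrite geq_max le_s1 andbT (leq_trans _ le_s1) // !size_cat leq_add2l leq_addl.
Qed.

End Reach.

Theorem theorem5p1 (H : pred F2) (y : F2) :
  is_subgroup H -> finite_index H ->
  (exists w : F2, H w && odd (F2len w)) ->
  exists N : nat, forall i : nat, 1 <= i -> N <= i ->
    forall x : F2, a_const H y i x = 0.
Proof.
move=> subH finH oddH.
have [M reachM] := reach_eventually y subH finH oddH.
exists M.+2 => -[|[|k]] // _ le_Mk x.
by rewrite /a_const Omega_eq0 ?eqxx // reachM.
Qed.
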